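(* Let $0<\epsilon<0.5$ and let $n,s,s_0\in\mathbb{N}$ with $s_0\mid n$ and $n\ge s>2s_0$. If $\boldsymbol{c}\in\Sigma_{\rm DNA}^n$ is GC-$(s_0,\epsilon)$-partition balanced, then $\boldsymbol{c}$ is GC-$(s,\delta)$-locally balanced with $$\delta=\frac{(s_0-1)(1-2\epsilon)}{s}+\epsilon.$$ Consequently every GC-$(s_0,\epsilon)$-partition balanced code of length $n$ is GC-$(s,\delta)$-locally balanced.
   Context: For $\boldsymbol{x}\in\Sigma_{\rm DNA}^n$ ($\Sigma_{\rm DNA}=\{\mathrm A,\mathrm T,\mathrm C,\mathrm G\}$), $\mathrm{wt}_{\rm GC}(\boldsymbol{x})$ is the number of positions equal to G or C. If $s_0\mid n$ and $\boldsymbol{x}=(\boldsymbol{x}^{(1)},\dots,\boldsymbol{x}^{(n/s_0)})$ with $\boldsymbol{x}^{(i)}=(x_{(i-1)s_0+1},\dots,x_{is_0})$, then $\boldsymbol{x}$ is GC-$(s_0,\epsilon)$-partition balanced if $|\mathrm{wt}_{\rm GC}(\boldsymbol{x}^{(i)})/s_0-0.5|\le\epsilon$ for all $i\in[n/s_0]$. For $s<n$ (or $s\le n$), $\boldsymbol{x}$ is GC-$(s,\delta)$-locally balanced if for every $i\in[n-s+1]$ the window $\boldsymbol{x}_i=(x_i,\dots,x_{i+s-1})$ satisfies $|\mathrm{wt}_{\rm GC}(\boldsymbol{x}_i)/s-0.5|\le\delta$. *)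

From mathcomp Require Import all_boot all_order all_algebra.
Set Implicit Arguments. Unset Strict Implicit. Unset Printing Implicit Defensive.
Import Order.TTheory GRing.Theory Num.Theory.

Inductive DNA := A | T | C | G.

Definition isGC (b : DNA) : bool :=
  match b with C | G => true | _ => false end.

(* A word of length n over DNA is an n.-tuple; positions are 0-indexed here. *)
Definition wt_GC_window (n : nat) (x : n.-tuple DNA) (i len : nat) : nat :=
  \sum_(i <= j < i + len) isGC (nth A x j).

Local Open Scope ring_scope.

(* GC-(s0,eps)-partition balanced: s0 | n and every block
   x^(k) = (x_{k s0 + 1}, ..., x_{(k+1) s0}) (1-indexed), k < n/s0,
   satisfies |wt/s0 - 1/2| <= eps. *)
Definition partition_balanced (R : realFieldType) (n : nat) (s0 : nat) (eps : R)
    (x : n.-tuple DNA) : Prop :=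
  (s0 %| n)%N /\
  forall k : nat, (k < n %/ s0)%N ->
    `| (wt_GC_window x (k * s0) s0)%:R / s0%:R - 1 / 2 | <= eps.

Definition locally_balanced (R : realFieldType) (n : nat) (s : nat) (delta : R)
    (x : n.-tuple DNA) : Prop :=
  forall i : nat, (i + s <= n)%N ->
    `| (wt_GC_window x i s)%:R / s%:R - 1 / 2 | <= delta.

From mathcomp Require Import all_boot all_order all_algebra.
From mathcomp Require Import zify ring lra.
Set Implicit Arguments. Unset Strict Implicit. Unset Printing Implicit Defensive.
Import Order.TTheory GRing.Theory Num.Theory.
Local Open Scope ring_scope.

(* Fix a window of length s starting at position i.  Cut it at
   the multiples of s0: it becomes a head of length a < s0, then m complete
   aligned blocks of the partition, then a tail of length b < s0.  Each
   complete block has GC-weight within s0 * (1/2 -+ eps) by partition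
   balance, so the run of blocks has weight within (s - a - b) * (1/2 -+ eps),
   while head and tail contribute a weight between 0 and a + b <= 2 (s0 - 1).
   An elementary real inequality turns these bounds into the deviation bound
   (s0 - 1)(1 - 2 eps)/s + eps for the whole window. *)

Section WindowWeight.
Variables (n : nat) (c : n.-tuple DNA).
Local Notation wt := (wt_GC_window c).

Lemma wt_split j l1 l2 : wt j (l1 + l2) = (wt j l1 + wt (j + l1) l2)%N.
Proof.
by rewrite /wt_GC_window addnA (@big_cat_nat _ _ _ (j + l1)) ?leq_addr.
Qed.

Lemma wt_le_len j l : (wt j l <= l)%N.
Proof.
rewrite /wt_GC_window -[leqRHS](addKn j) -[(_ - _)%N]muln1 -sum_nat_const_nat.
by apply: leq_sum => k _; case: isGC.
Qed.

Lemma block_weight_bounds (R : realFieldType) s0 (eps : R) k :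
  partition_balanced s0 eps c -> (0 < s0)%N -> (k < n %/ s0)%N ->
  s0%:R * (1 / 2 - eps) <= (wt (k * s0) s0)%:R /\
  (wt (k * s0) s0)%:R <= s0%:R * (1 / 2 + eps).
Proof.
move=> [_ balanced] s0_gt0 /balanced; set w := (wt _ _)%:R.
have s0R : (0 : R) < s0%:R by rewrite ltr0n.
rewrite ler_norml lerBrDr lerBlDr ler_pdivlMr // ler_pdivrMr // => /andP[lo hi].
by split; rewrite mulrC; lra.
Qed.

Lemma run_weight_bounds (R : realFieldType) s0 (eps : R) k m :
  partition_balanced s0 eps c -> (0 < s0)%N -> (k + m <= n %/ s0)%N ->
  (m * s0)%:R * (1 / 2 - eps) <= (wt (k * s0) (m * s0))%:R /\
  (wt (k * s0) (m * s0))%:R <= (m * s0)%:R * (1 / 2 + eps).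
Proof.
move=> balanced s0_gt0; elim: m => [|m IHm].
  by move=> _; rewrite mul0n /wt_GC_window addn0 big_geq // !mul0r.
rewrite addnS => km; have [lo hi] := IHm (ltnW km).
have [blo bhi] := block_weight_bounds balanced s0_gt0 km.
rewrite mulSnr wt_split -mulnDl !natrD !mulrDl.
by split; apply: lerD.
Qed.

End WindowWeight.

Lemma window_decomposition n s0 i s :
  (0 < s0)%N -> (s0 <= s)%N -> (i + s <= n)%N ->
  exists a b k m, [/\ (a < s0)%N, (b < s0)%N, s = (a + m * s0 + b)%N,
                      (i + a = k * s0)%N & (k + m <= n %/ s0)%N].
Proof.
move=> s0_gt0 s0_le_s win.
have last_block : ((i + s) %/ s0 <= n %/ s0)%N by rewrite leq_div2r.
exists ((i + s0.-1) %/ s0 * s0 - i)%N, (i + s - (i + s) %/ s0 * s0)%N,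
       ((i + s0.-1) %/ s0)%N, ((i + s) %/ s0 - (i + s0.-1) %/ s0)%N.
have := divn_eq (i + s0.-1) s0; have := ltn_pmod (i + s0.-1) s0_gt0.
have := divn_eq (i + s) s0; have := ltn_pmod (i + s) s0_gt0.
set k := ((i + s0.-1) %/ s0)%N; set k' := ((i + s) %/ s0)%N.
move: (_ %% s0)%N (_ %% s0)%N => r' r Hr' Ek' Hr Ek.
have k_le_k' : (k <= k')%N.
  by rewrite leqNgt -(leq_pmul2r s0_gt0) mulSn; lia.
have : (k * s0 <= k' * s0)%N by rewrite leq_pmul2r.
by split; rewrite ?mulnBl; lia.
Qed.

(* The real inequality behind the theorem: a window of length s made of a
   part of length p <= 2 r with weight P in [0, p] and a balanced part of
   length s - p deviates from 1/2 by at most r (1 - 2 eps)/s + eps. *)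
Lemma window_deviation_bound (R : realFieldType) (eps s r p P F : R) :
  eps <= 1 / 2 -> 0 < s -> 0 <= P -> P <= p -> p <= 2 * r ->
  (s - p) * (1 / 2 - eps) <= F -> F <= (s - p) * (1 / 2 + eps) ->
  `|(P + F) / s - 1 / 2| <= r * (1 - 2 * eps) / s + eps.
Proof.
move=> eps_le s_gt0 P_ge0 P_le p_le F_lo F_hi.
have s_neq0 : s != 0 by rewrite gt_eqF.
have -> : (P + F) / s - 1 / 2 = (P + F - s / 2) / s by field.
have -> : r * (1 - 2 * eps) / s + eps = (r * (1 - 2 * eps) + eps * s) / s
  by field.
rewrite normrM (gtr0_norm (_ : 0 < s^-1)) ?invr_gt0 // ler_pM2r ?invr_gt0 //.
rewrite ler_norml; apply/andP; split; nra.
Qed.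

Theorem lemma7 (R : realFieldType) (eps : R) (n s s0 : nat) :
  0 < eps -> eps < 1 / 2 ->
  (s0 %| n)%N -> (s <= n)%N -> (2 * s0 < s)%N ->
  forall c : n.-tuple DNA,
    partition_balanced s0 eps c ->
    locally_balanced s
      ((s0 - 1)%:R * (1 - 2 * eps) / s%:R + eps) c.
Proof.
move=> _ eps_lt s0_dvd s_le s_gt c balanced i win.
(* Blocks are nonempty: s0 = 0 would force n = 0, against 0 < s <= n. *)
have s0_gt0 : (0 < s0)%N.
  have [s0_eq0|//] := posnP s0.
  by move: s0_dvd; rewrite s0_eq0 dvd0n => /eqP n_eq0; lia.
have s0_le_s : (s0 <= s)%N by lia.
have [a [b [k [m [a_lt b_lt s_eq ia_eq km]]]]] :=
  window_decomposition s0_gt0 s0_le_s win.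
have [run_lo run_hi] := run_weight_bounds balanced s0_gt0 km.
have wt_eq : wt_GC_window c i s = (wt_GC_window c i a
    + wt_GC_window c (k * s0) (m * s0) + wt_GC_window c ((k + m) * s0) b)%N.
  by rewrite s_eq !wt_split addnA ia_eq mulnDl.
have run_len : (m * s0)%:R = s%:R - (a + b)%:R :> R by rewrite s_eq !natrD; ring.
rewrite wt_eq addnAC natrD; apply: (window_deviation_bound (p := (a + b)%:R)).
- exact: ltW.
- by rewrite ltr0n; lia.
- exact: ler0n.
- by rewrite ler_nat leq_add // wt_le_len.
- by rewrite -(natrM _ 2) ler_nat; lia.
- by rewrite -run_len.
- by rewrite -run_len.
Qed.
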